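(* After the event-update procedure has processed an event $e\in E_A$ (with all events processed along a linear extension of the causal order of $M$, each by the monitor of its own lifeline), the following hold for every lifeline $B$: (i) $\mathsf{vc}_A(B)=|\{f\in E_B\mid f\leq_M e\}|$; (ii) if $\mathsf{vc}_A(B)=0$, then all entries $\mathsf{var}_A(B,x)$ and $\mathsf{view}_A(B,\psi)$ are absent; (iii) if $\mathsf{vc}_A(B)=k>0$, then $\mathsf{var}_A(B,x)$ is defined and equal to $\mathsf{val}(e^B_k)(x)$ for every $x\in\mathsf{Vars}(\Phi)$; (iv) if $\mathsf{vc}_A(B)=k>0$, then $\mathsf{view}_A(B,\psi)$ is defined and $\mathsf{view}_A(B,\psi)=1$ iff $M,e^B_k\models\psi$, for every $\psi\in\mathsf{sub}(\Phi)$.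
   Context: Setting. $\mathscr L$ is a finite set of lifelines. A message sequence chart (MSC) is $M=(E,\to,\lhd,\mathsf{kind},\mathsf{pid},\mathsf{val})$ with $E$ a finite set of events, $\mathsf{pid}:E\to\mathscr L$, $E_A=\{e\in E\mid \mathsf{pid}(e)=A\}$. The relation $\to$ relates only events on the same lifeline, and for each $A$ its restriction to $E_A$ is the immediate-successor relation of a finite linear order $\leq_A$ (strict version $<_A$). $\mathsf{kind}(e)\in\{\mathsf{act},\mathsf{recv},\mathsf{choice}\}\cup(\{\mathsf{send}\}\times\mathscr L)$. The message relation $\lhd$ is a partial matching: if $s\lhd r$ then $\mathsf{kind}(s)=(\mathsf{send},\mathsf{pid}(r))$, $\mathsf{kind}(r)=\mathsf{recv}$, $\mathsf{pid}(s)\neq\mathsf{pid}(r)$; every receive has exactly one matching send, every send at most one matching receive (not necessarily FIFO). The graph of $\to$ and $\lhd$ edges is acyclic; the causal order $\leq_M$ is its reflexive transitive closure. $\nu_e=\mathsf{val}(e)$ is the valuation (local store of $\mathsf{pid}(e)$ after $e$). $e^B_k$ is the $k$-th event of lifeline $B$ (indexing from 1). Causal Past Logic (CPL): terms $t::=x\mid A.x$; atoms $\alpha::=p(t_1,\dots,t_n)$; formulas $\varphi::=\alpha\mid @_A\varphi\mid \mathsf{Y}\varphi\mid\varphi_1\mathbin{\mathsf{S}}\varphi_2\mid\varphi_1\wedge\varphi_2\mid\varphi_1\vee\varphi_2\mid\neg\varphi$. For $e$ with $\mathsf{pid}(e)=A$: $\mathsf{last}_{\mathsf{loc}}(e)=\max\{f\in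 E_A\mid f<_A e\}$ and $\mathsf{last}_B(e)=\max\{f\in E_B\mid f\leq_M e\}$ (when they exist). Term $x$ evaluates to $\nu_e(x)$, term $A.x$ to $\nu_{\mathsf{last}_A(e)}(x)$ when defined; an atom is false if a term is undefined, otherwise its truth is fixed by the application. $M,e\models\mathsf{Y}\varphi$ iff $\mathsf{last}_{\mathsf{loc}}(e)$ exists and satisfies $\varphi$; $M,e\models @_A\varphi$ iff $\mathsf{last}_A(e)$ exists and satisfies $\varphi$; for $e\in E_A$, $M,e\models\varphi_1\mathbin{\mathsf{S}}\varphi_2$ iff some $f\leq_A e$ in $E_A$ satisfies $\varphi_2$ and all $g\in E_A$ with $f<_A g\leq_A e$ satisfy $\varphi_1$; Booleans as usual. Monitor. $\Phi$ is a finite set of CPL formulas, $\mathsf{sub}(\Phi)$ its subformulas, $\mathsf{Vars}(\Phi)$ the variable names in terms $B.x$. Each lifeline $A$ keeps a vector clock $\mathsf{vc}_A:\mathscr L\to\mathbb N$ (initially all $0$), partial tables $\mathsf{view}_A:\mathscr L\times\mathsf{sub}(\Phi)\rightharpoonup\{0,1\}$ and $\mathsf{var}_A:\mathscr L\times\mathsf{Vars}(\Phi)\rightharpoonup\mathsf{Val}$ (initially empty), a local store $\sigma_A$, and a total map $\mathsf{old}_A:\mathsf{sub}(\Phi)\to\{0,1\}$. Formula evaluation $\mathsf{Eval}_A(\psi,e,\mathsf{old}_A)$: atoms read unqualified variables from $\sigma_A$ and $B.x$ from $\mathsf{var}_A(B,x)$ (missing entry makes the atom false); $\mathsf{Y}\theta\mapsto(\mathsf{vc}_A(A)>1)\wedge\mathsf{old}_A(\theta)$;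 $@_B\theta\mapsto$ $\mathsf{Eval}_A(\theta,\cdot)$ if $B=A$, $0$ if $\mathsf{vc}_A(B)=0$, else $\mathsf{view}_A(B,\theta)$; $\theta_1\mathbin{\mathsf{S}}\theta_2\mapsto\mathsf{Eval}_A(\theta_2,\cdot)\vee(\mathsf{Eval}_A(\theta_1,\cdot)\wedge(\mathsf{vc}_A(A)>1)\wedge\mathsf{old}_A(\theta_1\mathbin{\mathsf{S}}\theta_2))$; Booleans recursively. Event-update procedure for a new event $e$ on $A$: (1) if $e$ is a receive with incoming message $\mu$, then for each $B$ with $\mu.\mathsf{vc}(B)>\mathsf{vc}_A(B)$ copy $\mathsf{view}_A(B,\psi)\gets\mu.\mathsf{view}(B,\psi)$ for all $\psi$ and $\mathsf{var}_A(B,x)\gets\mu.\mathsf{var}(B,x)$ for all $x$; then $\mathsf{vc}_A\gets\max(\mathsf{vc}_A,\mu.\mathsf{vc})$ pointwise. (2) For all $\psi$, $\mathsf{old}_A(\psi)\gets\mathsf{view}_A(A,\psi)$ if defined, else $0$. (3) $\mathsf{vc}_A(A)\gets\mathsf{vc}_A(A)+1$; $\sigma_A\gets\mathsf{effect}(e,\sigma_A)$ (the store after this step induces $\mathsf{val}(e)$); $\mathsf{var}_A(A,x)\gets\sigma_A(x)$ for all $x\in\mathsf{Vars}(\Phi)$. (4) Evaluate all $\psi\in\mathsf{sub}(\Phi)$ bottom-up via $\mathsf{Eval}_A$, then set $\mathsf{view}_A(A,\psi)$ to the results. (5) If $\mathsf{kind}(e)=(\mathsf{send},B)$, send to $B$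 the message (payload, $\mathsf{vc}_A$, $\mathsf{view}_A$, $\mathsf{var}_A$). Used fact (Local evaluation lemma): if before step (4) the state is coherent — i.e. $\mathsf{vc}_A(B)=|\{f\in E_B\mid f\leq_M e\}|$ for all $B$; entries for $B\neq A$ with $k=\mathsf{vc}_A(B)>0$ correctly describe $e^B_k$ and are absent when $\mathsf{vc}_A(B)=0$; $\sigma_A$ and $\mathsf{var}_A(A,\cdot)$ agree with $\mathsf{val}(e)$; $\mathsf{old}_A(\psi)$ is the truth of $\psi$ at the previous local event (false if none) — then $\mathsf{Eval}_A(\psi,e,\mathsf{old}_A)=1$ iff $M,e\models\psi$. *)

From HB Require Import structures.
From mathcomp Require Import all_boot.

Set Implicit Arguments.
Unset Strict Implicit.
Unset Printing Implicit Defensive.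

(* terms  t ::= x | A.x *)
Inductive term (L Var : Type) : Type :=
| TLoc of Var
| TRem of L & Var.

Inductive formula (L Var Pred : Type) : Type :=
| FAtom of Pred & seq (term L Var)
| FAt of L & formula L Var Pred
| FY of formula L Var Pred
| FS of formula L Var Pred & formula L Var Pred
| FAnd of formula L Var Pred & formula L Var Pred
| FOr of formula L Var Pred & formula L Var Pred
| FNot of formula L Var Pred.

Arguments TLoc {L Var}.
Arguments TRem {L Var}.
Arguments FAtom {L Var Pred}.
Arguments FAt {L Var Pred}.
Arguments FY {L Var Pred}.
Arguments FS {L Var Pred}.
Arguments FAnd {L Var Pred}.
Arguments FOr {L Var Pred}.
Arguments FNot {L Var Pred}.

Definition term_eqb (L Var : eqType) (t u : term L Var) : bool :=
  match t, u with
  | TLoc x, TLoc y => x == y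
  | TRem A x, TRem B y => (A == B) && (x == y)
  | _, _ => false
  end.

Lemma term_eqP (L Var : eqType) : Equality.axiom (@term_eqb L Var).
Proof.
case=> [x|A x] [y|B y] /=; try by constructor.
- by apply: (iffP eqP) => [->|[]].
- by apply: (iffP andP) => [[/eqP-> /eqP->]|[-> ->]].
Qed.

HB.instance Definition _ (L Var : eqType) :=
  hasDecEq.Build (term L Var) (@term_eqP L Var).

Fixpoint formula_eqb (L Var Pred : eqType) (f g : formula L Var Pred) : bool :=
  match f, g with
  | FAtom p ts, FAtom q us => (p == q) && (ts == us)
  | FAt A f1, FAt B g1 => (A == B) && formula_eqb f1 g1
  | FY f1, FY g1 => formula_eqb f1 g1
  | FS f1 f2, FS g1 g2 => formula_eqb f1 g1 && formula_eqb f2 g2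
  | FAnd f1 f2, FAnd g1 g2 => formula_eqb f1 g1 && formula_eqb f2 g2
  | FOr f1 f2, FOr g1 g2 => formula_eqb f1 g1 && formula_eqb f2 g2
  | FNot f1, FNot g1 => formula_eqb f1 g1
  | _, _ => false
  end.

Lemma formula_eqP (L Var Pred : eqType) : Equality.axiom (@formula_eqb L Var Pred).
Proof.
elim=> [p ts|A f IH|f IH|f1 IH1 f2 IH2|f1 IH1 f2 IH2|f1 IH1 f2 IH2|f IH]
       [q us|B g|g|g1 g2|g1 g2|g1 g2|g] /=; try by constructor.
- by apply: (iffP andP) => [[/eqP-> /eqP->]|[-> ->]].
- apply: (iffP andP) => [[/eqP-> H]|[<- <-]]; first by rewrite (elimT (IH g) H).
  by split=> //; apply/(IH f).
- by apply: (iffP (IH g)) => [->|[]].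
- apply: (iffP andP) => [[H1 H2]|[<- <-]]; first by rewrite (elimT (IH1 g1) H1) (elimT (IH2 g2) H2).
  by split; [apply/(IH1 f1)|apply/(IH2 f2)].
- apply: (iffP andP) => [[H1 H2]|[<- <-]]; first by rewrite (elimT (IH1 g1) H1) (elimT (IH2 g2) H2).
  by split; [apply/(IH1 f1)|apply/(IH2 f2)].
- apply: (iffP andP) => [[H1 H2]|[<- <-]]; first by rewrite (elimT (IH1 g1) H1) (elimT (IH2 g2) H2).
  by split; [apply/(IH1 f1)|apply/(IH2 f2)].
- by apply: (iffP (IH g)) => [->|[]].
Qed.

HB.instance Definition _ (L Var Pred : eqType) :=
  hasDecEq.Build (formula L Var Pred) (@formula_eqP L Var Pred).

Fixpoint subf (L Var Pred : Type) (f : formula L Var Pred) : seq (formula L Var Pred) :=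
  f :: match f with
       | FAtom _ _ => [::]
       | FAt _ g | FY g | FNot g => subf g
       | FS g h | FAnd g h | FOr g h => subf g ++ subf h
       end.

Definition subs (L Var Pred : Type) (Phi : seq (formula L Var Pred)) :=
  flatten (map (@subf L Var Pred) Phi).

Definition remote_var (L Var : Type) (t : term L Var) : option Var :=
  if t is TRem _ x then Some x else None.

Definition atom_vars (L Var Pred : Type) (f : formula L Var Pred) : seq Var :=
  if f is FAtom _ ts then pmap (@remote_var L Var) ts else [::].

Definition Vars (L Var Pred : Type) (Phi : seq (formula L Var Pred)) : seq Var :=
  flatten (map (@atom_vars L Var Pred) (subs Phi)).

Fixpoint osequence (T : Type) (s : seq (option T)) : option (seq T) :=
  match s with
  | [::] => Some [::]
  | Some v :: s' => omap (cons v) (osequence s')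
  | None :: _ => None
  end.

Inductive kindT (L : Type) : Type :=
| KAct | KRecv | KChoice | KSend of L.
Arguments KAct {L}. Arguments KRecv {L}. Arguments KChoice {L}.

Record msc (L : finType) (Var Val : Type) := MSC {
  ev    : finType;
  succ  : rel ev;
  msgr  : rel ev;
  kind  : ev -> kindT L;
  pid   : ev -> L;
  nu   : ev -> Var -> Val         (* nu_e: local store of pid e after e *)
}.

Section MSCDefs.
Variables (L : finType) (Var Val : Type) (M : msc L Var Val).

Local Notation E := (ev M).

Definition edge (e f : E) : bool := succ e f || msgr e f.

Definition le_M (e f : E) : bool := connect edge e f.

Definition le_loc (e f : E) : bool := connect (@succ _ _ _ M) e f.
Definition lt_loc (e f : E) : bool := le_loc e f && (e != f).

Definition succ_is_immediate_successor (A : L) : Prop :=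
  exists le : rel E,
    [/\ forall e, pid e = A -> le e e,
        forall e f, pid e = A -> pid f = A -> le e f -> le f e -> e = f,
        forall e f g, pid e = A -> pid f = A -> pid g = A ->
                      le e f -> le f g -> le e g,
        forall e f, pid e = A -> pid f = A -> le e f || le f e
      & forall e f, pid e = A -> pid f = A ->
          succ e f =
          [&& le e f, e != f &
              ~~ [exists g, [&& pid g == A, le e g, e != g, le g f & g != f]]]].

Definition msc_wf : Prop :=
  [/\
      forall e f : E, succ e f -> pid e = pid f,
      forall A, succ_is_immediate_successor A,
      forall s r : E, msgr s r ->
        [/\ kind s = KSend (pid r), kind r = KRecv & pid s <> pid r],
      forall r : E, kind r = KRecv -> (exists! s : E, msgr s r) &
      forall s r1 r2 : E, msgr s r1 -> msgr s r2 -> r1 = r2] /\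
  (forall e f, edge e f -> ~~ connect edge f e).

Definition last_loc (e : E) : option E :=
  [pick f | [&& pid f == pid e, lt_loc f e &
             [forall g, ((pid g == pid e) && lt_loc g e) ==> le_loc g f]]].

Definition last_on (B : L) (e : E) : option E :=
  [pick f | [&& pid f == B, le_M f e &
             [forall g, ((pid g == B) && le_M g e) ==> le_loc g f]]].

(* f is e^B_k, the k-th event (from 1) of lifeline B *)
Definition kth_event (B : L) (k : nat) (f : E) : bool :=
  (pid f == B) && (#|[pred g | (pid g == B) && le_loc g f]| == k).

Definition lin_ext (lin : seq E) : Prop :=
  [/\ uniq lin, forall e, e \in lin
    & forall e f, le_M e f -> index e lin <= index f lin].

End MSCDefs.

Section CPLSem.
Variables (L : finType) (Var Pred : eqType) (Val : Type).
Variable interp : Pred -> seq Val -> bool.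
Variable M : msc L Var Val.
Local Notation E := (ev M).

Definition term_val (e : E) (t : term L Var) : option Val :=
  match t with
  | TLoc x => Some (nu e x)
  | TRem B x => omap (fun f => nu f x) (last_on B e)
  end.

Fixpoint sat (phi : formula L Var Pred) (e : E) : Prop :=
  match phi with
  | FAtom p ts =>
      match osequence (map (term_val e) ts) with
      | Some vs => interp p vs
      | None => False
      end
  | FAt B psi => exists f, last_on B e = Some f /\ sat psi f
  | FY psi => exists f, last_loc e = Some f /\ sat psi f
  | FS psi1 psi2 =>
      exists f, [/\ pid f = pid e, le_loc f e, sat psi2 f &
                    forall g, pid g = pid e -> lt_loc f g -> le_loc g e -> sat psi1 g]
  | FAnd psi1 psi2 => sat psi1 e /\ sat psi2 e
  | FOr psi1 psi2 => sat psi1 e \/ sat psi2 e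
  | FNot psi => ~ sat psi e
  end.

End CPLSem.

Section Monitor.
Variables (L : finType) (Var Pred : eqType) (Val : Type).
Variable interp : Pred -> seq Val -> bool.
Variable Phi : seq (formula L Var Pred).
Variable M : msc L Var Val.
Variable sigma0 : L -> Var -> Val.
Variable effect : ev M -> (Var -> Val) -> (Var -> Val).
Local Notation E := (ev M).
Local Notation fml := (formula L Var Pred).

Record mstate := MState {
  vc    : L -> nat;
  view  : L -> fml -> option bool;
  vars  : L -> Var -> option Val;
  sigma : Var -> Val;
  old   : fml -> bool
}.

Record message := Msg {
  mvc   : L -> nat;
  mview : L -> fml -> option bool;
  mvar  : L -> Var -> option Val
}.

Definition init_state (A : L) : mstate :=
  MState (fun _ => 0) (fun _ _ => None) (fun _ _ => None) (sigma0 A) (fun _ => false).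

Definition mterm (st : mstate) (t : term L Var) : option Val :=
  match t with
  | TLoc x => Some (sigma st x)
  | TRem B x => vars st B x
  end.

Fixpoint meval (A : L) (st : mstate) (psi : fml) : bool :=
  match psi with
  | FAtom p ts =>
      match osequence (map (mterm st) ts) with
      | Some vs => interp p vs
      | None => false
      end
  | FY th => (1 < vc st A) && old st th
  | FAt B th =>
      if B == A then meval A st th
      else if vc st B == 0 then false else odflt false (view st B th)
  | FS th1 th2 =>
      meval A st th2 || [&& meval A st th1, 1 < vc st A & old st psi]
  | FAnd th1 th2 => meval A st th1 && meval A st th2
  | FOr th1 th2 => meval A st th1 || meval A st th2
  | FNot th => ~~ meval A st th
  end.

(* step (1): merge an incoming message *)
Definition recv_merge (st : mstate) (mu : message) : mstate :=
  MState (fun B => maxn (vc st B) (mvc mu B))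
         (fun B => if vc st B < mvc mu B then mview mu B else view st B)
         (fun B => if vc st B < mvc mu B then mvar mu B else vars st B)
         (sigma st) (old st).

(* step (2) *)
Definition set_old (A : L) (st : mstate) : mstate :=
  MState (vc st) (view st) (vars st) (sigma st)
         (fun psi => odflt false (view st A psi)).

(* step (3) *)
Definition local_update (A : L) (e : E) (st : mstate) : mstate :=
  let s' := effect e (sigma st) in
  MState (fun B => if B == A then (vc st B).+1 else vc st B)
         (view st)
         (fun B x => if (B == A) && (x \in Vars Phi) then Some (s' x) else vars st B x)
         s' (old st).

(* step (4) *)
Definition eval_update (A : L) (st : mstate) : mstate :=
  MState (vc st)
         (fun B psi => if (B == A) && (psi \in subs Phi)
                       then Some (meval A st psi) else view st B psi)
         (vars st) (sigma st) (old st).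

Record config := Config {
  states : L -> mstate;
  sent   : E -> option message
}.

Definition init_config : config := Config init_state (fun _ => None).

Definition process (c : config) (e : E) : config :=
  let A := pid e in
  let st0 := states c A in
  let st1 :=
    if kind e is KRecv then
      match [pick s | msgr s e] with
      | Some s => if sent c s is Some mu then recv_merge st0 mu else st0
      | None => st0
      end
    else st0 in
  let st4 := eval_update A (local_update A e (set_old A st1)) in
  Config (fun B => if B == A then st4 else states c B)
         (fun s => if (s == e) && (if kind e is KSend _ then true else false)
                   then Some (Msg (vc st4) (view st4) (vars st4))
                   else sent c s).

Definition run (s : seq E) : config := foldl process init_config s.

End Monitor.

Definition val_induced (L : finType) (Var Val : Type) (M : msc L Var Val)
  (sigma0 : L -> Var -> Val) (effect : ev M -> (Var -> Val) -> (Var -> Val)) : Prop :=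
  forall e : ev M,
    nu e = effect e (if last_loc e is Some f then nu f else sigma0 (pid e)).

(* A monitor state is read as knowledge of a causally closed set D of events:
   the clock entry of a lifeline B counts the B-events of D, and the B-tables
   describe the last of them.  On a lifeline, causally closed sets are
   prefixes of the local order, so any two of them are nested; hence on each
   lifeline the union of the receiver's knowledge and of the message's has the
   larger of the two counts, and the fresher entry kept by step (1) describes
   its last event.  After step (1) the monitor of e knows exactly the strict
   causal past of e; steps (2) and (3) add e itself, and step (4) is correct by
   the local evaluation lemma, an induction on formulas that uses the unfolding
   a S b = b \/ (a /\ Y (a S b)).  By induction along the linear extension,
   every monitor knows the causal past of the events it has processed and
   every message carries the causal past of its send event. *)

From mathcomp Require Import all_boot.
Set Implicit Arguments. Unset Strict Implicit. Unset Printing Implicit Defensive.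

Section CausalOrder.
Variables (L : finType) (Var Val : Type) (M : msc L Var Val).
Hypothesis wf : msc_wf M.
Local Notation E := (ev M).

Lemma succ_pid (e f : E) : succ e f -> pid e = pid f.
Proof. by case: wf => [[succ_pid _ _ _ _] _]; apply: succ_pid. Qed.

Lemma msgr_spec (s r : E) :
  msgr s r -> [/\ kind s = KSend (pid r), kind r = KRecv & pid s <> pid r].
Proof. by case: wf => [[_ _ msgr_spec _ _] _]; apply: msgr_spec. Qed.

Lemma recv_sender (r : E) : kind r = KRecv -> exists! s, msgr s r.
Proof. by case: wf => [[_ _ _ recv_uniq _] _]; apply: recv_uniq. Qed.

Lemma le_loc_refl (e : E) : le_loc e e.
Proof. exact: connect0. Qed.

Lemma le_loc_trans (e f g : E) : le_loc e f -> le_loc f g -> le_loc e g.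
Proof. exact: connect_trans. Qed.

Lemma le_M_refl (e : E) : le_M e e.
Proof. exact: connect0. Qed.

Lemma le_M_trans (e f g : E) : le_M e f -> le_M f g -> le_M e g.
Proof. exact: connect_trans. Qed.

Lemma le_loc_pid (e f : E) : le_loc e f -> pid e = pid f.
Proof.
case/connectP=> p; elim: p e => [|g p IHp] e /=; first by move=> _ ->.
by case/andP=> /succ_pid -> /IHp.
Qed.

Lemma le_loc_le_M (e f : E) : le_loc e f -> le_M e f.
Proof. by apply: connect_sub => g h sgh; apply: connect1; rewrite /edge sgh. Qed.

Lemma le_M_anti (e f : E) : le_M e f -> le_M f e -> e = f.
Proof.
case/connectP=> [[|g p]] /=; first by move=> _ ->.
case/andP=> eg gp lastp lfe.
have lgf : le_M g f by apply/connectP; exists p.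
by have := wf.2 _ _ eg; rewrite (connect_trans lgf lfe).
Qed.

Lemma edge_neq (e f : E) : edge e f -> e != f.
Proof. by move=> ef; apply: contraTneq (wf.2 _ _ ef) => <-; rewrite connect0. Qed.

Lemma le_loc_anti (e f : E) : le_loc e f -> le_loc f e -> e = f.
Proof. by move=> /le_loc_le_M lef /le_loc_le_M; apply: le_M_anti. Qed.

Section LinearOrderOnLifeline.
Variables (A : L) (le : rel E).
Hypotheses (le_refl : forall e, pid e = A -> le e e)
  (le_anti : forall e f, pid e = A -> pid f = A -> le e f -> le f e -> e = f)
  (le_trans : forall e f g, pid e = A -> pid f = A -> pid g = A ->
                le e f -> le f g -> le e g)
  (succE : forall e f, pid e = A -> pid f = A ->
     succ e f = [&& le e f, e != f &
       ~~ [exists g, [&& pid g == A, le e g, e != g, le g f & g != f]]]).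

Definition le_interval (e f : E) := [pred g | [&& pid g == A, le e g & le g f]].

Lemma card_le_interval_lt (e f x y : E) :
  pid e = A -> pid f = A -> pid x = A -> pid y = A ->
  le e x -> le x y -> le y f -> (x != e) || (y != f) ->
  #|le_interval x y| < #|le_interval e f|.
Proof.
move=> Pe Pf Px Py lex lxy lyf xy_ne; apply: proper_card; apply/properP; split.
  apply/subsetP=> g /and3P[/eqP Pg lxg lgy].
  by rewrite inE Pg eqxx (le_trans Pe Px Pg lex lxg) (le_trans Pg Py Pf lgy lyf).
have lef := le_trans Pe Px Pf lex (le_trans Px Py Pf lxy lyf).
case/orP: xy_ne => [nxe|nyf].
  exists e; first by rewrite inE Pe eqxx lef le_refl.
  by rewrite inE Pe eqxx /=; move: nxe; apply: contra => /andP[lxe _]; rewrite (le_anti Px Pe).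
exists f; first by rewrite inE Pf eqxx lef le_refl.
by rewrite inE Pf eqxx /=; move: nyf; apply: contra => /andP[_ lfy]; rewrite (le_anti Py Pf).
Qed.

(* Induction on the size of the [le]-interval: two events that are not
   immediate successors have a third one strictly between them. *)
Lemma le_sub_le_loc (e f : E) : pid e = A -> pid f = A -> le e f -> le_loc e f.
Proof.
move: {2}#|le_interval e f| (leqnn #|le_interval e f|) => n.
elim: n e f => [|n IHn] e f size_ef Pe Pf lef.
  have : 0 < #|le_interval e f| by apply/card_gt0P; exists e; rewrite inE Pe eqxx le_refl.
  by rewrite ltnNge size_ef.
have [->|nef] := eqVneq e f; first exact: le_loc_refl.
case sef: (succ e f); first exact: connect1.
move: sef; rewrite succE // lef nef /= => /negbFE/existsP[g].
case/and5P=> /eqP Pg leg neg lgf ngf.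
apply: (@le_loc_trans _ g).
  apply: IHn => //; rewrite -ltnS; apply: leq_trans size_ef.
  by apply: card_le_interval_lt => //; rewrite ?le_refl ?ngf ?orbT.
apply: IHn => //; rewrite -ltnS; apply: leq_trans size_ef.
by apply: card_le_interval_lt => //; rewrite ?le_refl // eq_sym neg.
Qed.

End LinearOrderOnLifeline.

Lemma le_loc_total (e f : E) : pid e = pid f -> le_loc e f || le_loc f e.
Proof.
move=> Pef; case: wf => [[_ /(_ (pid e)) [le [refl anti trans total succE]] _ _ _] _].
have le_loc_of := le_sub_le_loc refl anti trans succE.
by case/orP: (total e f erefl (esym Pef)) => [/le_loc_of -> | /le_loc_of ->]; rewrite ?orbT.
Qed.

Lemma le_M_le_loc (e f : E) : pid e = pid f -> le_M e f -> le_loc e f.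
Proof.
move=> Pef lef; case/orP: (le_loc_total Pef) => // lfe.
by rewrite (le_M_anti lef (le_loc_le_M lfe)) le_loc_refl.
Qed.

Lemma le_M_loc_eq (e f : E) : pid e = pid f -> le_M e f = le_loc e f.
Proof. by move=> Pef; apply/idP/idP; [apply: le_M_le_loc | apply: le_loc_le_M]. Qed.

Definition rank (f : E) := #|[pred g | le_loc g f]|.

Lemma kth_eventE B k (f : E) : kth_event B k f = (pid f == B) && (rank f == k).
Proof.
rewrite /kth_event; case: eqP => //= Pf; congr (_ == k); apply: eq_card => g.
by rewrite !inE; case lgf: (le_loc g f); rewrite ?andbF // (le_loc_pid lgf) Pf eqxx.
Qed.

Lemma rank_lt (f g : E) : le_loc f g -> f != g -> rank f < rank g.
Proof.
move=> lfg nfg; apply: proper_card; apply/properP; split.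
  by apply/subsetP=> h; rewrite !inE => /le_loc_trans; apply.
exists g; rewrite !inE ?le_loc_refl //.
by apply: contra nfg => lgf; rewrite (le_loc_anti lfg lgf).
Qed.

Lemma kth_event_uniq B k (f f' : E) : kth_event B k f -> kth_event B k f' -> f = f'.
Proof.
rewrite !kth_eventE => /andP[/eqP Pf /eqP rf] /andP[/eqP Pf' /eqP rf'].
have [//|nff'] := eqVneq f f'.
case/orP: (le_loc_total (etrans Pf (esym Pf'))) => [lff'|lf'f].
  by have := rank_lt lff' nff'; rewrite rf rf' ltnn.
by have := rank_lt lf'f (contra_neq esym nff'); rewrite rf rf' ltnn.
Qed.

Lemma kth_event_gt0 B k (f : E) : kth_event B k f -> 0 < k.
Proof.
by case/andP=> Pf /eqP <-; apply/card_gt0P; exists f; rewrite inE Pf le_loc_refl.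
Qed.

Definition lprefix B (T : pred E) : Prop :=
  (forall f, T f -> pid f = B) /\ (forall f g, T f -> le_loc g f -> T g).

Section Lprefix.
Variables (B : L) (T : pred E).
Hypothesis preT : lprefix B T.

Lemma lprefix_kth (p : E) : T p -> (forall g, T g -> le_loc g p) -> kth_event B #|T| p.
Proof.
case: preT => onB downT Tp maxp; rewrite /kth_event onB // eqxx /=.
apply/eqP/eq_card => g; rewrite !inE.
apply/andP/idP => [[_ /(downT _ _ Tp)]|Tg] //.
by rewrite onB // eqxx maxp.
Qed.

Lemma lprefix_max : 0 < #|T| -> exists2 p, T p & forall g, T g -> le_loc g p.
Proof.
case: preT => onB _ /card_gt0P[p0 Tp0].
case: (arg_maxnP rank (Tp0 : T p0)) => p Tp maxp; exists p => // g Tg.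
case/orP: (le_loc_total (etrans (onB _ Tg) (esym (onB _ Tp)))) => // lpg.
have [-> //|npg] := eqVneq p g; first exact: le_loc_refl.
by have := rank_lt lpg npg; rewrite ltnNge (maxp g Tg : rank g <= rank p).
Qed.

End Lprefix.

Lemma lprefix_total B (T1 T2 : pred E) : lprefix B T1 -> lprefix B T2 ->
  (forall f, T1 f -> T2 f) \/ (forall f, T2 f -> T1 f).
Proof.
case=> onB1 down1 [onB2 down2].
have [/existsP[f /andP[T1f nT2f]]|/existsPn sub12] := boolP [exists f, T1 f && ~~ T2 f].
  right=> g T2g.
  case/orP: (le_loc_total (etrans (onB2 _ T2g) (esym (onB1 _ T1f)))) => [lgf|lfg].
    exact: down1 lgf.
  by rewrite (down2 _ _ T2g lfg) in nT2f.
by left=> f T1f; move: (sub12 f); rewrite T1f negbK.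
Qed.

Lemma card_lprefixU B (T1 T2 : pred E) : lprefix B T1 -> lprefix B T2 ->
  #|[predU T1 & T2]| = maxn #|T1| #|T2|.
Proof.
move=> pre1 pre2; case: (lprefix_total pre1 pre2) => sub.
  have -> : #|[predU T1 & T2]| = #|T2|.
    by apply: eq_card => f; rewrite !inE; apply/orP/idP => [[/sub|]|] //; right.
  by apply/esym/maxn_idPr/subset_leq_card/subsetP => f; apply: sub.
have -> : #|[predU T1 & T2]| = #|T1|.
  by apply: eq_card => f; rewrite !inE; apply/orP/idP => [[|/sub]|] //; left.
by apply/esym/maxn_idPl/subset_leq_card/subsetP => f; apply: sub.
Qed.

Definition downclosed (D : pred E) : Prop := forall f g, D f -> le_M g f -> D g.

Lemma lprefix_on B (D : pred E) : downclosed D -> lprefix B [pred f | (pid f == B) && D f].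
Proof.
move=> downD; split=> [f /andP[/eqP //]|f g /andP[/eqP Pf Df] lgf].
by rewrite inE (le_loc_pid lgf) Pf eqxx (downD _ _ Df (le_loc_le_M lgf)).
Qed.

Lemma downclosed_le_M (e : E) : downclosed (fun f => le_M f e).
Proof. by move=> f g lfe lgf; apply: le_M_trans lgf lfe. Qed.

(* [last_on B e] and [last_loc e] are instances of [lmax] up to conversion. *)
Definition lmax B (P : pred E) : option E :=
  [pick f | [&& pid f == B, P f & [forall g, ((pid g == B) && P g) ==> le_loc g f]]].

Variant lmax_spec B (P : pred E) : option E -> Prop :=
| LmaxNone of #|[pred f | (pid f == B) && P f]| = 0 : lmax_spec B P None
| LmaxSome p of pid p = B & P p & (forall g, pid g = B -> P g -> le_loc g p)
    & kth_event B #|[pred f | (pid f == B) && P f]| p : lmax_spec B P (Some p).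

Lemma lmaxP B (P : pred E) :
  lprefix B [pred f | (pid f == B) && P f] -> lmax_spec B P (lmax B P).
Proof.
move=> preP; rewrite /lmax; case: pickP => [p /and3P[/eqP Pp Pp' /forallP maxp]|none].
  have maxp' g : pid g = B -> P g -> le_loc g p.
    by move=> Pg Pg'; have := maxp g; rewrite Pg eqxx Pg'.
  apply: LmaxSome => //; apply: lprefix_kth => //; first by rewrite inE Pp eqxx.
  by move=> g /andP[/eqP]; apply: maxp'.
have [none0|pos] := posnP #|[pred f | (pid f == B) && P f]|; first exact: LmaxNone.
case: (lprefix_max preP pos) => p /andP[Pp Pp'] maxp.
move: (none p); rewrite Pp Pp' /= => /negbT/negP; case.
by apply/forallP => g; apply/implyP; apply: maxp.
Qed.

Lemma last_onP B (e : E) : lmax_spec B (fun f => le_M f e) (last_on B e).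
Proof. exact/lmaxP/lprefix_on/downclosed_le_M. Qed.

Lemma last_locP (e : E) : lmax_spec (pid e) (fun f => lt_loc f e) (last_loc e).
Proof.
apply: lmaxP; split=> [f /andP[/eqP //]|f g /andP[_ /andP[lfe nfe]] lgf].
rewrite inE (le_loc_pid lgf) (le_loc_pid lfe) eqxx /lt_loc (le_loc_trans lgf lfe).
by apply: contra nfe => /eqP gef; rewrite -gef in lfe *; rewrite (le_loc_anti lfe lgf).
Qed.

Lemma last_on_self (e : E) : last_on (pid e) e = Some e.
Proof.
case: last_onP => [none|p Pp lpe maxp _].
  by have := card0_eq none e; rewrite inE eqxx le_M_refl.
by rewrite (le_loc_anti (maxp e erefl (le_M_refl e)) (le_M_le_loc Pp lpe)).
Qed.

Lemma kth_event_self (e : E) : kth_event (pid e) #|[pred f | (pid f == pid e) && le_M f e]| e.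
Proof.
apply: lprefix_kth; first exact/lprefix_on/downclosed_le_M.
  by rewrite inE eqxx le_M_refl.
by move=> g /andP[/eqP Pg lge]; apply: le_M_le_loc.
Qed.

Lemma card_past_self (e : E) :
  #|[pred f | (pid f == pid e) && le_M f e]| =
  #|[pred f | (pid f == pid e) && lt_loc f e]|.+1.
Proof.
rewrite (cardD1 e) inE eqxx le_M_refl add1n; congr S; apply: eq_card => f.
rewrite !inE /lt_loc; have [-> |nfe] /= := eqVneq f e; first by rewrite !andbF.
by rewrite andbT; have [/le_M_loc_eq|] //= := eqVneq (pid f) (pid e).
Qed.

End CausalOrder.

Section SinceUnfolding.
Variables (L : finType) (Var Pred : eqType) (Val : Type).
Variables (interp : Pred -> seq Val -> bool) (M : msc L Var Val).
Hypothesis wf : msc_wf M.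
Local Notation sat := (sat interp).

Lemma sat_FS (a b : formula L Var Pred) (e : ev M) :
  sat (FS a b) e <->
  sat b e \/ (sat a e /\ exists p, last_loc e = Some p /\ sat (FS a b) p).
Proof.
split=> [[f [Pf lfe sbf satA]]|].
  have [<-|nfe] := eqVneq f e; [by left | right].
  have ltfe : lt_loc f e by rewrite /lt_loc lfe nfe.
  case: (last_locP wf) => [none|p Pp ltpe maxp _].
    by have := card0_eq none f; rewrite inE Pf eqxx ltfe.
  split; first by apply: satA; rewrite ?le_loc_refl.
  exists p; split=> //; exists f; split; rewrite ?Pp ?maxp // => g Pg ltfg lgp.
  by apply: satA; rewrite ?Pg // (le_loc_trans lgp) //; case/andP: ltpe.
case=> [sbe|[sae [p [lastp [f [Pf lfp sbf satA]]]]]].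
  exists e; split; rewrite ?le_loc_refl // => g _ /andP[leg neg] lge.
  by rewrite (le_loc_anti wf leg lge) eqxx in neg.
move: lastp; case: (last_locP wf) => // q Pp /andP[lpe _] maxp _ [eqp]; subst q.
exists f; split; rewrite ?Pf ?(le_loc_trans lfp lpe) // => g Pg ltfg lge.
have [-> //|nge] := eqVneq g e.
by apply: satA; rewrite ?Pg ?Pp // maxp // /lt_loc lge nge.
Qed.

End SinceUnfolding.

Section Coherence.
Variables (L : finType) (Var Pred : eqType) (Val : Type).
Variables (interp : Pred -> seq Val -> bool) (Phi : seq (formula L Var Pred)).
Variable M : msc L Var Val.
Hypothesis wf : msc_wf M.
Local Notation E := (ev M).
Local Notation message := (message L Var Pred Val).
Local Notation mstate := (mstate L Var Pred Val).

Definition snapshot (st : mstate) : message := Msg (vc st) (view st) (vars st).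

Definition coherent (mu : message) (D : pred E) : Prop :=
  forall B : L,
  [/\ mvc mu B = #|[pred f | (pid f == B) && D f]|,
      mvc mu B = 0 ->
        (forall x, mvar mu B x = None) /\ (forall psi, mview mu B psi = None),
      forall (k : nat) (f : E), mvc mu B = k -> 0 < k -> kth_event B k f ->
        forall x, x \in Vars Phi -> mvar mu B x = Some (nu f x)
    & forall (k : nat) (f : E), mvc mu B = k -> 0 < k -> kth_event B k f ->
        forall psi, psi \in subs Phi ->
          exists b : bool, mview mu B psi = Some b /\ (b = true <-> sat interp psi f)].

Lemma eq_coherent (mu : message) (D D' : pred E) :
  D =1 D' -> coherent mu D -> coherent mu D'.
Proof.
move=> eqD coh B; case: (coh B) => cnt none vars_ok view_ok; split=> //.
by rewrite cnt; apply: eq_card => f; rewrite !inE eqD.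
Qed.

Lemma coherent_merge (st : mstate) (mu : message) (D1 D2 : pred E) :
  downclosed D1 -> downclosed D2 ->
  coherent (snapshot st) D1 -> coherent mu D2 ->
  coherent (snapshot (recv_merge st mu)) [pred f | D1 f || D2 f].
Proof.
move=> down1 down2 coh1 coh2 B /=.
case: (coh1 B) => /= cnt1 none1 vars1 view1; case: (coh2 B) => cnt2 none2 vars2 view2.
have fresh k : maxn (vc st B) (mvc mu B) = k -> vc st B < mvc mu B -> mvc mu B = k.
  by move=> <- /ltnW/maxn_idPr.
have stale k : maxn (vc st B) (mvc mu B) = k -> mvc mu B <= vc st B -> vc st B = k.
  by move=> <- /maxn_idPl.
split.
- rewrite cnt1 cnt2 -(card_lprefixU wf (lprefix_on wf B down1) (lprefix_on wf B down2)).
  by apply: eq_card => f; rewrite !inE; case: (pid f == B).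
- move/eqP; rewrite -leqn0 geq_max !leqn0 => /andP[/eqP vc0 /eqP mvc0].
  by rewrite vc0 mvc0; apply: none1.
- move=> k f ck k_gt0 kth x xin; case: ltnP => [/(fresh _ ck)|/(stale _ ck)] ck'.
    exact: vars2 ck' k_gt0 kth x xin.
  exact: vars1 ck' k_gt0 kth x xin.
- move=> k f ck k_gt0 kth psi psin; case: ltnP => [/(fresh _ ck)|/(stale _ ck)] ck'.
    exact: view2 ck' k_gt0 kth psi psin.
  exact: view1 ck' k_gt0 kth psi psin.
Qed.

End Coherence.

Section Subformulas.
Variables (L : finType) (Var Pred : eqType).
Local Notation fml := (formula L Var Pred).

Lemma subf_refl (psi : fml) : psi \in subf psi.
Proof. by case: psi => * /=; rewrite inE eqxx. Qed.

Lemma subf_trans (phi psi th : fml) :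
  psi \in subf phi -> th \in subf psi -> th \in subf phi.
Proof.
elim: phi => [p ts|B a IH|a IH|a IHa b IHb|a IHa b IHb|a IHa b IHb|a IH] /=;
  first by rewrite inE => /eqP ->.
all: rewrite inE ?mem_cat => /predU1P[-> // | sub_psi th_psi]; rewrite inE ?mem_cat.
all: try by rewrite (IH sub_psi th_psi) orbT.
all: by case/orP: sub_psi => [/IHa/(_ th_psi)|/IHb/(_ th_psi)] ->; rewrite ?orbT.
Qed.

Lemma subs_subf (Phi : seq fml) (psi th : fml) :
  psi \in subs Phi -> th \in subf psi -> th \in subs Phi.
Proof.
move=> /flatten_mapP[phi phin psi_phi] th_psi; apply/flatten_mapP.
by exists phi => //; apply: subf_trans th_psi.
Qed.

Lemma remote_Vars (Phi : seq fml) p ts (B : L) x :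
  FAtom p ts \in subs Phi -> TRem B x \in ts -> x \in Vars Phi.
Proof.
move=> atom_in Bx_in; apply/flatten_mapP; exists (FAtom p ts) => //.
by rewrite /atom_vars mem_pmap; apply/mapP; exists (TRem B x).
Qed.

End Subformulas.

Section LocalEvaluation.
Variables (L : finType) (Var Pred : eqType) (Val : Type).
Variables (interp : Pred -> seq Val -> bool) (Phi : seq (formula L Var Pred)).
Variable M : msc L Var Val.
Hypothesis wf : msc_wf M.
Local Notation fml := (formula L Var Pred).
Local Notation sat := (sat interp).

(* What [Eval] reads from a state coherent with the strict causal past of [e]
   after steps (2) and (3) of the event-update procedure for [e]. *)
Variables (e : ev M) (st : mstate L Var Pred Val).
Hypotheses (sigma_ok : sigma st = nu e)
  (vars_ok : forall B x, x \in Vars Phi -> vars st B x = term_val e (TRem B x))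
  (vc_ok : (1 < vc st (pid e)) = (last_loc e != None))
  (old_ok : forall th, th \in subs Phi ->
     old st th <-> exists p, last_loc e = Some p /\ sat th p)
  (view_ok : forall B th, B != pid e -> th \in subs Phi ->
     (if vc st B == 0 then false else odflt false (view st B th)) <->
     exists f, last_on B e = Some f /\ sat th f).

Lemma meval_correct (psi : fml) :
  psi \in subs Phi -> meval interp (pid e) st psi <-> sat psi e.
Proof.
elim: psi => [p ts|B th IH|th IH|a IHa b IHb|a IHa b IHb|a IHa b IHb|th IH] psin;
  have child th' : th' \in subf _ -> th' \in subs Phi := subs_subf psin.
all: try have thin : th \in subs Phi by apply: child; rewrite /= inE subf_refl orbT.
all: try have [ain bin] : a \in subs Phi /\ b \in subs Phi
  by split; apply: child; rewrite /= !(inE, mem_cat, subf_refl, orbT).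
- rewrite /=; have -> : map (mterm st) ts = map (term_val e) ts.
    apply/eq_in_map => -[x|B x] t_in /=; first by rewrite sigma_ok.
    exact/vars_ok/(remote_Vars psin t_in).
  by case: osequence.
- rewrite /=; have [-> | nBe] := eqVneq B (pid e); last exact: view_ok.
  rewrite (last_on_self wf).
  by split=> [/(IH thin) ?|[_ [[<-] /(IH thin)]]] //; exists e.
- rewrite /= vc_ok; split=> [/andP[_ /(old_ok thin)] // | past].
  by rewrite (proj2 (old_ok thin) past) andbT; case: past => p [-> _].
- apply: iff_trans (iff_sym (sat_FS interp wf a b e)).
  rewrite [meval _ _ _ _]/= vc_ok; split.
    case/orP=> [/(IHb bin) | /and3P[/(IHa ain) sae _ /(old_ok psin) past]]; first by left.
    by right.
  case=> [/(IHb bin) -> // | [/(IHa ain) sae past]].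
  apply/orP; right; apply/and3P; split; [done | by case: past => p [-> _] | ].
  exact/(old_ok psin).
- by rewrite /=; split=> [/andP[/(IHa ain) ? /(IHb bin) ?] | [/(IHa ain) -> /(IHb bin) ->]].
- rewrite /=; split=> [/orP[/(IHa ain) | /(IHb bin)] | [/(IHa ain) | /(IHb bin)] ->];
    by [left | right | rewrite ?orbT].
- by rewrite /=; split=> [/negP nm /(IH thin) | ns]; last apply/negP => /(IH thin).
Qed.

End LocalEvaluation.

Section EventUpdate.
Variables (L : finType) (Var Pred : eqType) (Val : Type).
Variables (interp : Pred -> seq Val -> bool) (Phi : seq (formula L Var Pred)).
Variables (M : msc L Var Val) (sigma0 : L -> Var -> Val).
Variable effect : ev M -> (Var -> Val) -> (Var -> Val).
Hypotheses (wf : msc_wf M) (val_effect : val_induced sigma0 effect).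
Local Notation E := (ev M).
Local Notation sat := (sat interp).
Local Notation coherent := (coherent interp Phi).

(* [st1] is the state of the monitor of [e] after step (1), knowing the strict
   causal past [D1] of [e]; [st] is the state after steps (2) and (3). *)
Variables (e : E) (st1 : mstate L Var Pred Val) (D1 : pred E).
Hypotheses (coh1 : coherent (snapshot st1) D1)
  (pastE : forall f, le_M f e = D1 f || (f == e)) (notD1 : ~~ D1 e)
  (sigma1 : sigma st1 = if last_loc e is Some p then nu p else sigma0 (pid e)).

Local Notation st := (local_update Phi effect (pid e) e (set_old (pid e) st1)).

Lemma effect_prev : effect e (sigma st1) = nu e.
Proof. by rewrite sigma1 -val_effect. Qed.

Lemma vc_self_prev : vc st1 (pid e) = #|[pred f | (pid f == pid e) && lt_loc f e]|.
Proof.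
case: (coh1 (pid e)) => /= -> _ _ _; apply: eq_card => f; rewrite !inE /lt_loc.
have [Pf|] //= := eqVneq (pid f) (pid e).
have [-> | nfe] := eqVneq f e; first by rewrite (negbTE notD1) andbF.
by rewrite andbT -(le_M_loc_eq wf Pf) pastE (negbTE nfe) orbF.
Qed.

Lemma vc_other_prev B : B != pid e -> vc st1 B = #|[pred f | (pid f == B) && le_M f e]|.
Proof.
move=> nBe; case: (coh1 B) => /= -> _ _ _; apply: eq_card => f; rewrite !inE pastE.
have [Pf|] //= := eqVneq (pid f) B.
have [fe|_] := eqVneq f e; last by rewrite orbF.
by rewrite -Pf fe eqxx in nBe.
Qed.

Lemma vars_prepared B x : x \in Vars Phi -> vars st B x = term_val e (TRem B x).
Proof.
move=> xin /=; rewrite xin andbT effect_prev.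
have [-> | nBe] := eqVneq B (pid e); first by rewrite (last_on_self wf).
case: (coh1 B) => /= _ none vars_ok _.
case: (last_onP wf B e) => [past0 | q _ _ _ kth] /=.
  by rewrite (proj1 (none _)) // vc_other_prev.
exact: vars_ok _ q (vc_other_prev nBe) (kth_event_gt0 kth) kth _ xin.
Qed.

Lemma vc_prepared_gt1 : (1 < vc st (pid e)) = (last_loc e != None).
Proof.
rewrite /= eqxx ltnS vc_self_prev.
by case: (last_locP wf e) => [-> | p _ _ _ /kth_event_gt0 ->].
Qed.

Lemma old_prepared th : th \in subs Phi ->
  old st th <-> exists p, last_loc e = Some p /\ sat th p.
Proof.
move=> thin /=; case: (coh1 (pid e)) => /= _ none _ view_ok.
case: (last_locP wf e) => [past0 | p _ _ _ kth].
  by rewrite (proj2 (none _)) ?vc_self_prev //; split=> // -[p []].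
have [b [-> sat_b]] := view_ok _ p vc_self_prev (kth_event_gt0 kth) kth th thin.
by split=> [/sat_b | [_ [[<-] /sat_b]]] //; exists p.
Qed.

Lemma view_prepared B th : B != pid e -> th \in subs Phi ->
  (if vc st B == 0 then false else odflt false (view st B th)) <->
  exists f, last_on B e = Some f /\ sat th f.
Proof.
move=> nBe thin /=; rewrite (negbTE nBe) vc_other_prev //.
case: (coh1 B) => /= _ _ _ view_ok.
case: (last_onP wf B e) => [-> | q _ _ _ kth] /=; first by split=> // -[f []].
rewrite (negbTE (lt0n_neq0 (kth_event_gt0 kth))).
have [b [-> sat_b]] := view_ok _ q (vc_other_prev nBe) (kth_event_gt0 kth) kth th thin.
by split=> [/sat_b | [_ [[<-] /sat_b]]] //; exists q.
Qed.

Lemma coherent_event_update :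
  coherent (snapshot (eval_update interp Phi (pid e) st)) (fun f => le_M f e).
Proof.
have eval_ok psi : psi \in subs Phi -> meval interp (pid e) st psi <-> sat psi e.
  exact: (meval_correct (e := e) (st := st) wf effect_prev (@vars_prepared)
            vc_prepared_gt1 (@old_prepared) (@view_prepared)).
move=> B /=; have [-> | nBe] := eqVneq B (pid e).
  have vc_e : (vc st1 (pid e)).+1 = #|[pred f | (pid f == pid e) && le_M f e]|.
    by rewrite vc_self_prev card_past_self.
  have self k f : (vc st1 (pid e)).+1 = k -> kth_event (pid e) k f -> f = e.
    by rewrite vc_e => <- /(kth_event_uniq wf (kth_event_self wf e)).
  split=> // [k f /self eq_fe _ /eq_fe -> x xin | k f /self eq_fe _ /eq_fe -> psi psin].
    by rewrite xin effect_prev.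
  by rewrite psin; exists (meval interp (pid e) st psi); split=> //; apply: eval_ok.
case: (coh1 B) => /= _ none vars_ok view_ok; split.
- exact: vc_other_prev.
- by move=> /none[vars0 view0]; split=> [x | psi]; rewrite ?vars0 ?view0.
- exact: vars_ok.
- exact: view_ok.
Qed.

End EventUpdate.

Section Run.
Variables (L : finType) (Var Pred : eqType) (Val : Type).
Variables (interp : Pred -> seq Val -> bool) (Phi : seq (formula L Var Pred)).
Variables (M : msc L Var Val) (sigma0 : L -> Var -> Val).
Variable effect : ev M -> (Var -> Val) -> (Var -> Val).
Hypotheses (wf : msc_wf M) (val_effect : val_induced sigma0 effect).
Variable lin : seq (ev M).
Hypothesis lin_ok : lin_ext lin.
Local Notation E := (ev M).
Local Notation mstate := (mstate L Var Pred Val).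
Local Notation coherent := (coherent interp Phi).
Local Notation cfg n := (run interp Phi sigma0 effect (take n lin)).

Definition is_send (e : E) : bool := if kind e is KSend _ then true else false.

Definition merged (c : config Pred M) (e : E) : mstate :=
  if kind e is KRecv then
    match [pick s | msgr s e] with
    | Some s => if sent c s is Some mu then recv_merge (states c (pid e)) mu
                else states c (pid e)
    | None => states c (pid e)
    end
  else states c (pid e).

Definition updated (c : config Pred M) (e : E) : mstate :=
  eval_update interp Phi (pid e)
    (local_update Phi effect (pid e) e (set_old (pid e) (merged c e))).

Lemma process_states c e B :
  states (process interp Phi effect c e) B =
  if B == pid e then updated c e else states c B.
Proof. by []. Qed.

Lemma process_sent c e s :
  sent (process interp Phi effect c e) s =
  if (s == e) && is_send e then Some (snapshot (updated c e)) else sent c s.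
Proof. by []. Qed.

Lemma sigma_merged c e : sigma (merged c e) = sigma (states c (pid e)).
Proof.
rewrite /merged; case: (kind e) => //; case: pickP => // s _.
by case: (sent c s).
Qed.

Lemma mem_lin (e : E) : e \in lin.
Proof. by case: lin_ok. Qed.

Lemma index_le_M (f g : E) : le_M f g -> index f lin <= index g lin.
Proof. by case: lin_ok => _ _; apply. Qed.

Lemma index_inj (f g : E) : index f lin = index g lin -> f = g.
Proof. by move=> eq_fg; rewrite -(nth_index f (mem_lin f)) eq_fg nth_index ?mem_lin. Qed.

Lemma index_lt_M (f g : E) : le_M f g -> f != g -> index f lin < index g lin.
Proof.
move=> lfg nfg; rewrite ltn_neqAle index_le_M // andbT.
by apply: contra nfg => /eqP/index_inj ->.
Qed.

Lemma run_take_succ (e : E) :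
  cfg (index e lin).+1 = process interp Phi effect (cfg (index e lin)) e.
Proof.
by rewrite /run (take_nth e) ?index_mem ?mem_lin // foldl_rcons nth_index ?mem_lin.
Qed.

Definition known n (A : L) : pred E :=
  fun f => [exists g, [&& index g lin < n, pid g == A & le_M f g]].

Lemma downclosed_known n A : downclosed (known n A).
Proof.
move=> f h /existsP[g /and3P[ig Pg lfg]] lhf; apply/existsP; exists g.
by rewrite ig Pg (le_M_trans lhf lfg).
Qed.

Definition store_ok (A : L) (st : mstate) : Prop :=
  (vc st A = 0 -> sigma st = sigma0 A) /\
  (forall f : E, kth_event A (vc st A) f -> sigma st = nu f).

Definition invariant n : Prop :=
  [/\ forall A, coherent (snapshot (states (cfg n) A)) (known n A),
      forall A, store_ok A (states (cfg n) A)
    & forall s, index s lin < n -> is_send s ->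
        exists2 mu, sent (cfg n) s = Some mu & coherent mu (fun f => le_M f s)].

Lemma invariant0 : invariant 0.
Proof.
rewrite /invariant take0; split=> // [A B | A]; last by split=> // f /kth_event_gt0.
split=> // [|k f <- // | k f <- //].
by apply/esym/eq_card0 => f; rewrite !inE; apply/andP => -[_ /existsP[]].
Qed.

Section Step.
Variable e : E.
Local Notation n := (index e lin).

Lemma known_self_lt f : known n (pid e) f -> le_M f e && (f != e).
Proof.
case/existsP=> g /and3P[ig /eqP Pg lfg].
have lge : le_loc g e.
  case/orP: (le_loc_total wf Pg) => // leg.
  by have := index_le_M (le_loc_le_M leg); rewrite leqNgt ig.
rewrite (le_M_trans lfg (le_loc_le_M lge)) /=; apply: contraTneq ig => eq_fe.
by rewrite -leqNgt index_le_M // -eq_fe.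
Qed.

Lemma known_self_loc f : pid f = pid e -> known n (pid e) f = lt_loc f e.
Proof.
move=> Pf; apply/idP/idP => [/known_self_lt/andP[lfe nfe] | /andP[lfe nfe]].
  by rewrite /lt_loc nfe andbT -(le_M_loc_eq wf Pf).
apply/existsP; exists f; rewrite Pf eqxx le_M_refl !andbT.
exact: index_lt_M (le_loc_le_M lfe) nfe.
Qed.

Lemma past_split f : le_M f e -> f != e ->
  known n (pid e) f \/ exists2 h, le_M f h & msgr h e.
Proof.
case/connectP=> p; case/lastP: p => [|p h] /=; first by move=> _ ef; rewrite ef eqxx.
rewrite rcons_path last_rcons => /andP[fp edge_he] eh; rewrite -{h}eh in edge_he *.
set h := last f p.
have lfh : le_M f h by apply/connectP; exists p.
case/orP: edge_he => [she | mhe] nfe; last by right; exists h.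
left; apply/existsP; exists h; rewrite lfh (succ_pid wf she) eqxx !andbT.
have ehe : edge h e by rewrite /edge she.
exact: index_lt_M (connect1 ehe) (edge_neq wf ehe).
Qed.

Lemma past_not_recv : kind e <> KRecv ->
  forall f, le_M f e = known n (pid e) f || (f == e).
Proof.
move=> not_recv f; apply/idP/idP => [lfe | /orP[/known_self_lt/andP[] // | /eqP->]].
  have [-> | nfe] := eqVneq f e; first by rewrite orbT.
  by case: (past_split lfe nfe) => [-> // | [h _ /(msgr_spec wf)[]]].
exact: le_M_refl.
Qed.

Lemma past_recv s : msgr s e ->
  forall f, le_M f e = [|| known n (pid e) f, le_M f s | f == e].
Proof.
move=> mse f; have lse : le_M s e by apply: connect1; rewrite /edge mse orbT.
apply/idP/idP => [lfe | /or3P[/known_self_lt/andP[] // | /le_M_trans/(_ lse) // | /eqP->]].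
  have [-> | nfe] := eqVneq f e; first by rewrite !orbT.
  case: (past_split lfe nfe) => [-> // | [h lfh mhe]].
  have [_ recv_e _] := msgr_spec wf mse.
  case: (recv_sender wf recv_e) => s' [_ uniq_s'].
  by rewrite -(uniq_s' _ mse) (uniq_s' _ mhe) lfh orbT.
exact: le_M_refl.
Qed.

Lemma known_succ_self : known n.+1 (pid e) =1 (fun f => le_M f e).
Proof.
move=> f; apply/existsP/idP => [[g /and3P[ig /eqP Pg lfg]] | lfe].
  rewrite ltnS leq_eqVlt in ig; case/orP: ig => [/eqP ig | ig].
    by rewrite (index_inj ig) in lfg.
  have /known_self_lt/andP[lge _] : known n (pid e) g.
    by apply/existsP; exists g; rewrite ig Pg eqxx le_M_refl.
  exact: le_M_trans lfg lge.
by exists e; rewrite ltnSn eqxx lfe.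
Qed.

Lemma known_succ_other A : A != pid e -> known n.+1 A =1 known n A.
Proof.
move=> nAe f; apply/existsP/existsP => -[g /and3P[ig Pg lfg]]; exists g; last first.
  by rewrite ltnW ?Pg.
rewrite Pg lfg !andbT; rewrite ltnS leq_eqVlt in ig; case/orP: ig => // /eqP ig.
by rewrite -(eqP Pg) (index_inj ig) eqxx in nAe.
Qed.

Hypothesis inv : invariant n.

Lemma sigma_prev :
  sigma (states (cfg n) (pid e)) = if last_loc e is Some p then nu p else sigma0 (pid e).
Proof.
case: inv => coh store _; case: (store (pid e)) => store0 store_kth.
have vc_e : vc (states (cfg n) (pid e)) (pid e) =
            #|[pred f | (pid f == pid e) && lt_loc f e]|.
  have [/= -> _ _ _] := coh (pid e) (pid e); apply: eq_card => f; rewrite !inE.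
  by have [/known_self_loc -> |] //= := eqVneq (pid f) (pid e).
case: (last_locP wf e) => [past0 | p _ _ _ kth]; first by apply: store0; rewrite vc_e.
by apply: store_kth; rewrite vc_e.
Qed.

Lemma coherent_merged : exists D1 : pred E,
  [/\ coherent (snapshot (merged (cfg n) e)) D1,
      forall f, le_M f e = D1 f || (f == e) & ~~ D1 e].
Proof.
case: inv => coh _ sent_ok.
have not_known : ~~ known n (pid e) e by apply/negP => /known_self_lt; rewrite eqxx andbF.
rewrite /merged; case Ke: (kind e) => [| | | B];
  try by exists (known n (pid e)); split=> //; apply: past_not_recv; rewrite Ke.
case: (recv_sender wf Ke) => s [mse uniq_s].
case: pickP => [s' ms'e | none]; last by have := none s; rewrite mse.
rewrite -(uniq_s _ ms'e); have ese : edge s e by rewrite /edge mse orbT.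
have [send_s _ _] := msgr_spec wf mse.
have s_send : is_send s by rewrite /is_send send_s.
have [mu sent_s coh_mu] := sent_ok s (index_lt_M (connect1 ese) (edge_neq wf ese)) s_send.
rewrite sent_s; exists [pred f | known n (pid e) f || le_M f s]; split.
- apply: (coherent_merge wf) => //; [exact: downclosed_known | exact: downclosed_le_M].
- by move=> f; rewrite (past_recv mse) orbA.
- rewrite inE negb_or not_known /=; apply: contraTN (edge_neq wf ese) => les.
  by rewrite (le_M_anti wf (connect1 ese) les) eqxx.
Qed.

Lemma invariant_step : invariant n.+1.
Proof.
have [D1 [coh1 pastE notD1]] := coherent_merged.
have sigma1 : sigma (merged (cfg n) e) =
              if last_loc e is Some p then nu p else sigma0 (pid e).
  by rewrite sigma_merged sigma_prev.
have coh_e := coherent_event_update wf val_effect coh1 pastE notD1 sigma1.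
have vc_e : vc (updated (cfg n) e) (pid e) =
            #|[pred f | (pid f == pid e) && le_M f e]| by case: (coh_e (pid e)).
case: inv => coh store sent_ok; rewrite /invariant run_take_succ.
split=> [A | A | s lt_s send_s]; rewrite ?process_states ?process_sent.
- have [-> | nAe] := eqVneq A (pid e).
    exact: eq_coherent (fsym known_succ_self) coh_e.
  exact: eq_coherent (fsym (known_succ_other nAe)) (coh A).
- have [-> | nAe] := eqVneq A (pid e); last exact: store.
  split=> [| f]; rewrite vc_e; first by move/card0_eq/(_ e); rewrite inE eqxx le_M_refl.
  move/(kth_event_uniq wf (kth_event_self wf e)) <-.
  by rewrite -(effect_prev val_effect sigma1).
- have [eq_se | nse] := eqVneq s e.
    by subst s; rewrite send_s; exists (snapshot (updated (cfg n) e)).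
  apply: sent_ok => //; rewrite ltnS leq_eqVlt in lt_s; case/orP: lt_s => // /eqP/index_inj.
  by move/eqP; rewrite (negbTE nse).
Qed.

End Step.

Lemma invariant_take (x0 : E) m : m <= size lin -> invariant m.
Proof.
elim: m => [_ | m IHm lt_m]; first exact: invariant0.
have index_m : index (nth x0 lin m) lin = m by rewrite index_uniq //; case: lin_ok.
by rewrite -index_m; apply: invariant_step; rewrite index_m; apply/IHm/ltnW.
Qed.

End Run.

Theorem lemma2
  (L : finType) (Var Pred : eqType) (Val : Type)
  (interp : Pred -> seq Val -> bool)
  (Phi : seq (formula L Var Pred))
  (M : msc L Var Val)
  (sigma0 : L -> Var -> Val)
  (effect : ev M -> (Var -> Val) -> (Var -> Val))
  (lin : seq (ev M)) (e : ev M) :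
  msc_wf M ->
  val_induced sigma0 effect ->
  lin_ext lin ->
  let stA := states (run interp Phi sigma0 effect (take (index e lin).+1 lin)) (pid e) in
  forall B : L,
  [/\ (* (i) *)
      vc stA B = #|[pred f | (pid f == B) && le_M f e]|,
      (* (ii) *)
      vc stA B = 0 ->
        (forall x, vars stA B x = None) /\ (forall psi, view stA B psi = None),
      (* (iii) *)
      forall (k : nat) (f : ev M), vc stA B = k -> 0 < k -> kth_event B k f ->
        forall x, x \in Vars Phi -> vars stA B x = Some (nu f x)
    & (* (iv) *)
      forall (k : nat) (f : ev M), vc stA B = k -> 0 < k -> kth_event B k f ->
        forall psi, psi \in subs Phi ->
          exists b : bool, view stA B psi = Some b /\ (b = true <-> sat interp psi f)].
Proof.
move=> wf val_effect lin_ok stA.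
have lt_e_size : (index e lin).+1 <= size lin by rewrite index_mem; case: lin_ok.
have [coh _ _] := invariant_take interp Phi wf val_effect lin_ok e lt_e_size.
exact: eq_coherent (known_succ_self wf lin_ok e) (coh (pid e)).
Qed.
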